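(* Let $H\in(0,1)$ and let $B^H=\{B^H(t):t\in[0,1]\}$ be a fractional Brownian motion with Hurst index $H$. Fix $\delta\in(0,H)$ and set $\ell_k=2^{-(H-\delta)k}$. For $\nu>0$ let $K(\nu)=\sup\{n\ge 1: 4\sqrt{n}>\nu\cdot 2^{\delta n}\}$. Then for any constants $\nu,\nu^*>0$, with $\rho=2(\nu+\nu^* )$, for all $k>K(\nu)$, $$\mathbb{P}\bigl(\|B^H_k-B^H_{k-1}\|_\infty\ge \rho\ell_k\bigr)=\mathbb{P}\Bigl(\max_{0\le j\le 2^{k-1}-1}|a^k_j-b^k_j|\ge \rho\ell_k\Bigr)\le 2\exp\bigl\{-(\nu^* )^2\cdot 2^{2k\delta-2}\bigr\}.$$
   Context: A fractional Brownian motion with Hurst index $H$ is a centered Gaussian process with $B^H(0)=0$ and covariance $\mathbb{E}[B^H(s)B^H(t)]=\tfrac12(|s|^{2H}+|t|^{2H}-|s-t|^{2H})$, taken with continuous sample paths. For $n\ge0$ let $t^n_i=i/2^n$, $i=0,\dots,2^n$, and $D_n=\{t^n_0,\dots,t^n_{2^n}\}$. $B^H_n$ denotes the continuous function on $[0,1]$ obtained by linear interpolation of the values $B^H(t^n_i)$, $i=0,\dots,2^n$ (the dyadic discretization of level $n$); $B^H_{-1}\equiv 0$. For $k\ge1$ and $j=0,\dots,2^{k-1}-1$: $a^k_j=B^H(t^k_{2j+1})$ and $b^k_j=\tfrac12\bigl(B^H(t^{k-1}_j)+B^H(t^{k-1}_{j+1})\bigr)$. $\|u\|_\infty=\sup_{t\in[0,1]}|u(t)|$.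 *)

From HB Require Import structures.
From mathcomp Require Import all_boot all_order all_algebra.
From mathcomp Require Import all_classical all_reals all_analysis.
Set Implicit Arguments. Unset Strict Implicit. Unset Printing Implicit Defensive.
Import Order.TTheory GRing.Theory Num.Theory numFieldNormedType.Exports.
Local Open Scope classical_set_scope.
Local Open Scope ring_scope.

Definition gaussian_law {R : realType} (v : R) : set R -> \bar R :=
  if v == 0 then \d_(0:R) else normal_prob 0 (Num.sqrt v).

Definition fbm_cov {R : realType} (H s t : R) : R :=
  (powR `|s| (2 * H) + powR `|t| (2 * H) - powR `|s - t| (2 * H)) / 2.

Definition is_fBm {R : realType} d (T : measurableType d) (P : probability T R)
    (H : R) (B : R -> T -> R) : Prop :=
  [/\ forall w, B 0 w = 0,
      forall t, t \in `[0, 1] -> measurable_fun setT (B t),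
      forall (n : nat) (c ts : 'I_n -> R),
        (forall i, ts i \in `[0, 1]) ->
        forall A : set R, measurable A ->
          P [set w | \sum_(i < n) c i * B (ts i) w \in A] =
          gaussian_law (\sum_(i < n) \sum_(j < n) c i * c j * fbm_cov H (ts i) (ts j)) A
    & forall w, {within `[(0:R), 1], continuous (fun t => B t w)}].

Definition dyadic {R : realType} (n i : nat) : R := i%:R / 2 ^+ n.

(* B_n: linear interpolation of the values B(t^n_i), i = 0..2^n. *)
Definition dyadic_interp {R : realType} T (B : R -> T -> R) (n : nat) (w : T) (t : R) : R :=
  let i := minn (Num.truncn (t * 2 ^+ n)) (2 ^ n).-1 in
  B (dyadic n i) w + (t * 2 ^+ n - i%:R) * (B (dyadic n i.+1) w - B (dyadic n i) w).

Definition sup_norm01 {R : realType} (u : R -> R) : R :=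
  sup [set `|u t| | t in `[(0:R), 1]].

Definition coef_a {R : realType} T (B : R -> T -> R) (k j : nat) (w : T) : R :=
  B (dyadic k (2 * j).+1) w.
Definition coef_b {R : realType} T (B : R -> T -> R) (k j : nat) (w : T) : R :=
  (B (dyadic k.-1 j) w + B (dyadic k.-1 j.+1) w) / 2.

From HB Require Import structures.
From mathcomp Require Import all_boot all_order all_algebra.
From mathcomp Require Import all_classical all_reals all_analysis.
From mathcomp Require Import ring lra zify measurable_realfun.
Set Implicit Arguments. Unset Strict Implicit. Unset Printing Implicit Defensive.
Import Order.TTheory GRing.Theory Num.Theory numFieldNormedType.Exports.
Local Open Scope classical_set_scope.
Local Open Scope ring_scope.

(* On each dyadic interval of level k-1, B_k - B_(k-1) is a tent function whose
   peak, at the midpoint t^k_(2j+1), is a^k_j - b^k_j; hence the sup norm of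
   B_k - B_(k-1) is max_j |a^k_j - b^k_j|.  Each a^k_j - b^k_j is a centered
   Gaussian of variance 2^(-2Hk) (1 - 2^(2H) / 4) <= 2^(-2Hk), and comparing its
   density with the one of twice the standard deviation gives
   P(|a^k_j - b^k_j| >= x) <= 2 exp(-x^2 2^(2Hk) / 4).  For x = rho l_k the
   exponent is (nu + nu^* )^2 2^(2 delta k); the union bound over the 2^(k-1)
   coefficients costs a factor 2^(k-1) <= exp(nu^2 2^(2 delta k)), which is
   exactly what k > K(nu) provides. *)

Lemma dyadic_double (R : realType) (k m : nat) : dyadic k.+1 (2 * m) = dyadic k m :> R.
Proof. by rewrite /dyadic natrM exprS; field; rewrite expf_neq0. Qed.

Lemma dyadic_odd (R : realType) (k j : nat) :
  dyadic k.+1 (2 * j).+1 = dyadic k j + (2 ^+ k.+1)^-1 :> R.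
Proof. by rewrite /dyadic exprS -(@natr1 R (2 * j)) natrM; field; rewrite expf_neq0. Qed.

Lemma dyadic_succ (R : realType) (k j : nat) :
  dyadic k j.+1 = dyadic k j + 2 * (2 ^+ k.+1)^-1 :> R.
Proof. by rewrite /dyadic exprS -(@natr1 R j); field; rewrite expf_neq0. Qed.

Lemma dyadic_in01 (R : realType) (n i : nat) :
  (i <= 2 ^ n)%N -> (dyadic n i : R) \in `[0, 1].
Proof.
move=> h; rewrite in_itv /= /dyadic divr_ge0 ?ler0n ?exprn_ge0 //=.
by rewrite ler_pdivrMr ?exprn_gt0 // mul1r -natrX ler_nat.
Qed.

Lemma dyadic_cell_exists (R : realType) (n : nat) (u : R) :
  0 <= u <= (2 ^ n)%:R -> exists2 i : nat, (i < 2 ^ n)%N & i%:R <= u <= i.+1%:R.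
Proof.
move=> /andP[u0 uN]; have [lt|ge] := ltnP (Num.truncn u) (2 ^ n).
  by exists (Num.truncn u) => //; have /andP[-> /ltW ->] := truncn_itv u0.
have uE : u = (2 ^ n)%:R.
  by apply/eqP; rewrite eq_le uN /= -truncn_ge_nat.
exists (2 ^ n).-1; first by rewrite prednK ?expn_gt0.
by rewrite prednK ?expn_gt0 // uE lexx andbT ler_nat; lia.
Qed.

Section dyadic_interpolation.
Variables (R : realType) (T : Type) (B : R -> T -> R) (w : T).

Lemma dyadic_interp_cell (n i : nat) (t : R) :
  (i < 2 ^ n)%N -> i%:R <= t * 2 ^+ n <= i.+1%:R ->
  dyadic_interp B n w t =
  B (dyadic n i) w + (t * 2 ^+ n - i%:R) * (B (dyadic n i.+1) w - B (dyadic n i) w).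
Proof.
move=> iN /andP[lo hi]; rewrite /dyadic_interp; cbv zeta.
set u := t * 2 ^+ n in lo hi *.
have u0 : 0 <= u by rewrite (le_trans _ lo).
have i_le : (i <= Num.truncn u)%N by rewrite truncn_ge_nat.
have le_Si : (Num.truncn u <= i.+1)%N.
  by rewrite truncn_le_nat (le_lt_trans hi) // ltr_nat.
have [->|ne] := eqVneq (Num.truncn u) i.
  by rewrite (minn_idPl _) //; rewrite -ltnS prednK ?expn_gt0.
(* [t] is the right end of the cell, where the formula of the next cell (or of
   the last one, selected by the [minn]) takes the same value. *)
have tr : Num.truncn u = i.+1 by lia.
have uE : u = i.+1%:R.
  by apply/eqP; rewrite eq_le hi /= -truncn_ge_nat // tr.
rewrite tr; have [lt|ge] := ltnP i.+1 (2 ^ n).-1.+1.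
  rewrite (minn_idPl _); last by rewrite -ltnS.
  by rewrite uE subrr mul0r addr0 -natrB // subSnn mul1r addrC subrK.
suff -> : minn i.+1 (2 ^ n).-1 = i by [].
by move: iN; rewrite -[(2 ^ n)%N]prednK ?expn_gt0; lia.
Qed.

Lemma dyadic_interp_diff_hat (k j : nat) (t : R) :
  (j < 2 ^ k)%N -> j%:R <= t * 2 ^+ k <= j.+1%:R ->
  dyadic_interp B k.+1 w t - dyadic_interp B k w t =
  (1 - `|t * 2 ^+ k.+1 - (2 * j).+1%:R|) * (coef_a B k.+1 j w - coef_b B k.+1 j w).
Proof.
move=> jN cell; have /andP[lo hi] := cell.
have uE : t * 2 ^+ k.+1 = 2 * (t * 2 ^+ k) by rewrite exprS mulrCA.
have jE : (2 * j).+1%:R = 2 * j%:R + 1 :> R by rewrite -natr1 natrM.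
rewrite (dyadic_interp_cell jN cell) /coef_a /coef_b /= uE jE.
rewrite -(@natr1 R j) in hi.
have [left|right] := lerP (2 * (t * 2 ^+ k)) (2 * j%:R + 1).
- have cell' : (2 * j)%N%:R <= t * 2 ^+ k.+1 <= (2 * j).+1%:R.
    by rewrite uE jE natrM; apply/andP; split; lra.
  rewrite (dyadic_interp_cell _ cell') ?expnS; last by lia.
  rewrite uE dyadic_double natrM.
  by field.
- have cell' : (2 * j).+1%:R <= t * 2 ^+ k.+1 <= (2 * j).+2%:R.
    by rewrite uE -(@natr1 R (2 * j).+1) jE; apply/andP; split; lra.
  rewrite (dyadic_interp_cell _ cell') ?expnS; last by lia.
  have -> : (2 * j).+2 = (2 * j.+1)%N by lia.
  rewrite uE dyadic_double jE.
  by field.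
Qed.

Lemma sup_norm01_interp_diff (k : nat) :
  sup_norm01 (fun t => dyadic_interp B k.+1 w t - dyadic_interp B k w t)
  = \big[Num.max/0]_(j < 2 ^ k) `|coef_a B k.+1 j w - coef_b B k.+1 j w|.
Proof.
set f := fun t => _ - _; set M := \big[Num.max/0]_(j < 2 ^ k) _.
have pow_gt0 : 0 < 2 ^+ k :> R by rewrite exprn_gt0.
have f_le_M (t : R) : t \in `[0, 1] -> `|f t| <= M.
  rewrite in_itv /= => /andP[t0 t1].
  have : 0 <= t * 2 ^+ k <= (2 ^ k)%:R.
    by rewrite natrX mulr_ge0 ?exprn_ge0 //= ler_piMl ?exprn_ge0.
  move=> /dyadic_cell_exists[j jN cell]; have /andP[lo hi] := cell.
  rewrite /f (dyadic_interp_diff_hat jN cell) normrM.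
  apply: le_trans (le_bigmax _ _ (Ordinal jN)).
  have near_mid : `|t * 2 ^+ k.+1 - (2 * j).+1%:R| <= 1.
    rewrite exprS mulrCA -(@natr1 R (2 * j)) natrM -(@natr1 R j) in hi *.
    by rewrite ler_norml; apply/andP; split; lra.
  by rewrite ler_piMl // ger0_norm ?subr_ge0 // gerBl.
have f_at_mid (j : 'I_(2 ^ k)) :
    `|coef_a B k.+1 j w - coef_b B k.+1 j w| = `|f (dyadic k.+1 (2 * j).+1)|.
  have mid : dyadic k.+1 (2 * j).+1 * 2 ^+ k = j%:R + 2^-1 :> R.
    rewrite /dyadic exprS -(@natr1 R (2 * j)) natrM; field; exact: lt0r_neq0.
  have cell : j%:R <= (dyadic k.+1 (2 * j).+1 : R) * 2 ^+ k <= j.+1%:R.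
    by rewrite mid -(@natr1 R j) lerDl invr_ge0 ler0n lerD2l invf_le1 ?ler1n.
  rewrite /f (dyadic_interp_diff_hat (ltn_ord j) cell) exprS mulrCA mid.
  rewrite -(@natr1 R (2 * j)) natrM.
  have -> : 2 * (j%:R + 2^-1) - (2 * j%:R + 1) = 0 :> R by field.
  by rewrite normr0 subr0 mul1r.
have zero_in : (0 : R) \in `[0, 1] by rewrite in_itv /= lexx ler01.
have ubM : ubound [set `|f t| | t in `[(0:R), 1]] M by move=> _ [t /f_le_M le <-].
apply/eqP; rewrite eq_le ge_sup ?bigmax_le //=.
- apply: le_trans (normr_ge0 (f 0)) _.
  by apply: ub_le_sup; [exists M | exists 0].
- move=> j _; rewrite f_at_mid; apply: ub_le_sup; first by exists M.
  exists (dyadic k.+1 (2 * j).+1) => //.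
  by apply: dyadic_in01; have := ltn_ord j; rewrite expnS; lia.
- by exists `|f 0|, 0.
Qed.
End dyadic_interpolation.

Section gaussian_tail.
Variable R : realType.

Lemma measurable_norm_ge (x : R) : measurable [set y : R | x <= `|y|].
Proof.
have -> : [set y : R | x <= `|y|] = setT `&` (Num.norm @^-1` `[x, +oo[%classic).
  by apply/seteqP; split => y /=; rewrite in_itv /= andbT; [split|case].
exact: (@normr_measurable R setT measurableT _ (measurable_itv _)).
Qed.

(* The factor 2 compensates the normalising constant: doubling the standard
   deviation halves the peak, and [exp (- y^2 / 2 s^2)] is at most
   [exp (- x^2 / 4 s^2) * exp (- y^2 / 8 s^2)] as soon as [x <= |y|]. *)
Lemma normal_pdf_le_wider (s x y : R) : 0 < s -> 0 <= x -> x <= `|y| ->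
  normal_pdf 0 s y <= 2 * expR (- (x ^+ 2 / (4 * s ^+ 2))) * normal_pdf 0 (2 * s) y.
Proof.
move=> s_gt0 x_ge0 xy.
have s_neq0 : s != 0 by rewrite gt_eqF.
rewrite /normal_pdf (negbTE s_neq0) mulf_eq0 pnatr_eq0 (negbTE s_neq0) /=.
have peak2 : normal_peak (2 * s) = normal_peak s / 2.
  rewrite /normal_peak exprMn -mulrA -mulrnAr.
  by rewrite sqrtrM ?exprn_ge0 // sqrtr_sqr ger0_norm ?ler0n // invfM mulrC.
rewrite peak2 /normal_fun !subr0 exprMn.
have q_gt0 : 0 < s ^+ 2 by rewrite exprn_gt0.
set q := s ^+ 2 in q_gt0 *; set p := normal_peak s.
have -> : 2 * expR (- (x ^+ 2 / (4 * q))) * (p / 2 * expR (- y ^+ 2 / (2 ^+ 2 * q *+ 2)))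
   = p * expR (- (x ^+ 2 / (4 * q)) + - y ^+ 2 / (2 ^+ 2 * q *+ 2)).
  by rewrite expRD; field.
apply: ler_wpM2l; first exact: normal_peak_ge0.
rewrite ler_expR -subr_ge0.
have x2_le : x ^+ 2 <= y ^+ 2.
  by rewrite -[y ^+ 2]real_normK ?num_real // lerXn2r ?nnegrE.
have -> : - (x ^+ 2 / (4 * q)) + - y ^+ 2 / (2 ^+ 2 * q *+ 2) - (- y ^+ 2 / (q *+ 2))
   = (3 * y ^+ 2 - 2 * x ^+ 2) / (8 * q).
  by rewrite -[q *+ 2]mulr_natr -[_ * q *+ 2]mulr_natr; field; rewrite gt_eqF.
apply: divr_ge0; last by rewrite mulr_ge0 // ltW.
have := sqr_ge0 y; lra.
Qed.

Lemma gaussian_law_norm_ge (v x : R) : 0 < v -> 0 <= x ->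
  (gaussian_law v [set y | (x <= `|y|)%R] <= (2 * expR (- (x ^+ 2 / (4 * v))))%:E)%E.
Proof.
move=> v_gt0 x_ge0; rewrite /gaussian_law (negbTE (lt0r_neq0 v_gt0)).
have s_gt0 : 0 < Num.sqrt v by rewrite sqrtr_gt0.
have vE : v = Num.sqrt v ^+ 2 by rewrite sqr_sqrtr // ltW.
set s := Num.sqrt v in s_gt0 vE *; rewrite vE; set c := 2 * expR _.
have c_ge0 : 0 <= c by rewrite mulr_ge0 ?expR_ge0.
rewrite /normal_prob.
apply: (@le_trans _ _ (\int[lebesgue_measure]_(y in [set y | (x <= `|y|)%R])
                          (c%:E * (normal_pdf 0 (2 * s) y)%:E))%E).
  apply: ge0_le_integral => //.
  - exact: measurable_norm_ge.
  - by move=> y _; rewrite lee_fin normal_pdf_ge0.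
  - by apply/measurable_funTS/measurable_EFinP; exact: measurable_normal_pdf.
  - apply/measurable_funTS/measurable_EFinP/measurable_funM => //.
    exact: measurable_normal_pdf.
  - by move=> y xy; rewrite -EFinM lee_fin normal_pdf_le_wider.
rewrite ge0_integralZl //; first last.
- by move=> y _; rewrite lee_fin normal_pdf_ge0.
- by apply/measurable_funTS/measurable_EFinP; exact: measurable_normal_pdf.
- exact: measurable_norm_ge.
rewrite -[leRHS]mule1 lee_wpmul2l ?lee_fin //.
exact: (probability_le1 (normal_prob 0 (2 * s)) (measurable_norm_ge x)).
Qed.

End gaussian_tail.

(* a^k_j - b^k_j = B(p + h) - (B p + B(p + 2h)) / 2 with p = t^(k-1)_j and
   h = 2^-k, written as the linear combination used in the Gaussian clause of
   [is_fBm]. *)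
Definition midpoint_defect_coef {R : realType} (i : 'I_3) : R :=
  nth 0 [:: 1; - 2^-1; - 2^-1] i.
Definition midpoint_defect_time {R : realType} (p h : R) (i : 'I_3) : R :=
  nth 0 [:: p + h; p; p + 2 * h] i.

Lemma fbm_cov_midpoint_defect (R : realType) (H p h : R) : 0 < H -> 0 <= p -> 0 < h ->
  \sum_(i < 3) \sum_(j < 3) midpoint_defect_coef i * midpoint_defect_coef j *
    fbm_cov H (midpoint_defect_time p h i) (midpoint_defect_time p h j)
  = powR h (2 * H) * (1 - powR 2 (2 * H) / 4).
Proof.
move=> H_gt0 p_ge0 h_gt0.
rewrite !big_ord_recr !big_ord0 /= /midpoint_defect_coef /midpoint_defect_time /fbm_cov /=.
have -> : p + h - p = h by ring.
have -> : p - (p + h) = - h by ring.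
have -> : p + h - (p + 2 * h) = - h by ring.
have -> : p + 2 * h - (p + h) = h by ring.
have -> : p - (p + 2 * h) = - (2 * h) by ring.
have -> : p + 2 * h - p = 2 * h by ring.
have h2_gt0 : 0 < 2 * h by rewrite mulr_gt0.
rewrite !subrr !normrN normr0 powR0 ?mulf_neq0 ?gt_eqF // !(gtr0_norm h_gt0) !(gtr0_norm h2_gt0).
rewrite powRM ?ler0n ?(ltW h_gt0) //.
by field.
Qed.

Section fbm_detail.
Context (R : realType) d (T : measurableType d) (P : probability T R).
Variables (H : R) (B : R -> T -> R).
Hypothesis fbm : is_fBm P H B.

Lemma measurable_fbm_detail_ge (k j : nat) (x : R) : (j < 2 ^ k)%N ->
  measurable [set w | x <= `|coef_a B k.+1 j w - coef_b B k.+1 j w|].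
Proof.
have [_ mB _ _] := fbm; move=> jN.
have mB_dyadic n i : (i <= 2 ^ n)%N -> measurable_fun setT (B (dyadic n i)).
  by move=> iN; apply/mB/dyadic_in01.
have mX : measurable_fun setT (fun w => coef_a B k.+1 j w - coef_b B k.+1 j w).
  apply/measurable_funB; first by apply: mB_dyadic; rewrite expnS; lia.
  apply/measurable_funM => //.
  by apply/measurable_funD; apply: mB_dyadic => /=; lia.
by rewrite -[X in measurable X]setTI; exact: mX measurableT _ (measurable_norm_ge x).
Qed.

Hypothesis H_gt0 : 0 < H.

Lemma fbm_detail_law (k j : nat) (A : set R) : (j < 2 ^ k)%N -> measurable A ->
  P [set w | coef_a B k.+1 j w - coef_b B k.+1 j w \in A]
  = gaussian_law (powR ((2 ^+ k.+1)^-1) (2 * H) * (1 - powR 2 (2 * H) / 4)) A.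
Proof.
have [_ _ gaussB _] := fbm; move=> jN mA.
set p : R := dyadic k j; set h : R := (2 ^+ k.+1)^-1.
have p_ge0 : 0 <= p by rewrite /p /dyadic divr_ge0 ?exprn_ge0.
have h_gt0 : 0 < h by rewrite invr_gt0 exprn_gt0.
have times_in01 i : midpoint_defect_time p h i \in `[0, 1].
  rewrite /midpoint_defect_time -dyadic_odd -dyadic_succ.
  by case: i => [[|[|[|//]]] _] /=; apply: dyadic_in01; rewrite ?expnS; lia.
rewrite -(fbm_cov_midpoint_defect H_gt0 p_ge0 h_gt0) -gaussB //.
congr (P _); apply/funext => w; congr (_ \in A).
rewrite !big_ord_recr big_ord0 /= /midpoint_defect_coef /midpoint_defect_time /=.
by rewrite /coef_a /coef_b -/p -dyadic_odd -dyadic_succ; field.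
Qed.

Lemma fbm_detail_tail (k j : nat) (x : R) : H < 1 -> (j < 2 ^ k)%N -> 0 <= x ->
  (P [set w | (x <= `|coef_a B k.+1 j w - coef_b B k.+1 j w|)%R]
   <= (2 * expR (- (x ^+ 2 / (4 * powR ((2 ^+ k.+1)^-1) (2 * H)))))%:E)%E.
Proof.
move=> H_lt1 jN x_ge0; set hH := powR _ (2 * H).
have hH_gt0 : 0 < hH by rewrite powR_gt0 // invr_gt0 exprn_gt0.
have pow_lt4 : powR 2 (2 * H) < 4.
  have -> : 4 = powR 2 2 :> R by rewrite powR_mulrn ?ler0n // expr2 -natrM.
  rewrite /powR pnatr_eq0 /=.
  by rewrite ltr_expR ltr_pM2r ?ln_gt0 ?ltr1n //; lra.
set v := hH * (1 - powR 2 (2 * H) / 4).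
have v_gt0 : 0 < v by rewrite mulr_gt0 // subr_gt0 ltr_pdivrMr // mul1r.
have v_le : v <= hH by rewrite ler_piMr ?(ltW hH_gt0) // gerBl divr_ge0 ?powR_ge0.
have -> : [set w | x <= `|coef_a B k.+1 j w - coef_b B k.+1 j w|]
        = [set w | coef_a B k.+1 j w - coef_b B k.+1 j w \in [set y | x <= `|y|]].
  by apply/seteqP; split => w; rewrite /= in_setE.
rewrite fbm_detail_law //; last exact: measurable_norm_ge.
apply: le_trans (gaussian_law_norm_ge v_gt0 x_ge0) _.
rewrite lee_fin ler_pM2l // ler_expR lerN2.
apply: ler_wpM2l; first exact: sqr_ge0.
by rewrite lef_pV2 ?posrE ?mulr_gt0 //; lra.
Qed.

End fbm_detail.

Lemma measure_bigmax_ge_le d (T : measurableType d) (R : realType)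
    (mu : {measure set T -> \bar R}) (n : nat) (f : nat -> T -> R) (x : R) :
  0 < x -> (forall j, (j < n)%N -> measurable [set w | x <= f j w]) ->
  (mu [set w | (x <= \big[Num.max/0]_(j < n) f j w)%R]
   <= \sum_(j < n) mu [set w | (x <= f j w)%R])%E.
Proof.
move=> x_gt0 mF; pose F j := [set w | x <= f j w].
have -> : [set w | x <= \big[Num.max/0]_(j < n) f j w] = \big[setU/set0]_(j < n) F j.
  rewrite -bigcup_mkord; apply/seteqP; split => w /=; last first.
    by move=> [j /= jn] /le_trans; apply; exact: (le_bigmax _ (fun i : 'I_n => f i w) (Ordinal jn)).
  move=> le_max; have [[j jn Fj]|Nf] := pselect (exists2 j, (j < n)%N & x <= f j w).
    by exists j.
  exfalso; move: le_max; apply/negP; rewrite -ltNge.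
  apply/bigmax_ltP; split => // j _; rewrite ltNge; apply/negP => le_f.
  exact: Nf (ex_intro2 _ _ (nat_of_ord j) (ltn_ord j) le_f).
have mFU : measurable (\big[setU/set0]_(j < n) F j).
  by apply: bigsetU_measurable => j _; exact: mF.
exact: (content_subadditive mu (fun j jn => mF j jn) mFU (@subset_refl _ _)).
Qed.

Lemma pow2n_le_expR (R : realType) (n : nat) : 2 ^+ n <= expR n%:R :> R.
Proof.
rewrite -[n%:R]mulr1 expRM_natl lerXn2r ?nnegrE ?expR_ge0 ?ler0n //.
by rewrite -[2]/(1 + 1 : R) expR_ge1Dx.
Qed.

Lemma above_threshold_sq (R : realType) (nu delta : R) (k : nat) : (1 <= k)%N ->
  (forall n : nat, (1 <= n)%N ->
     nu * powR 2 (delta * n%:R) < 4 * Num.sqrt n%:R -> (n < k)%N) ->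
  16 * k%:R <= nu ^+ 2 * powR 2 (2 * delta * k%:R).
Proof.
move=> k_ge1 below_k.
have le_k : 4 * Num.sqrt k%:R <= nu * powR 2 (delta * k%:R).
  by rewrite leNgt; apply/negP => /(below_k k k_ge1); rewrite ltnn.
have rhs_ge0 : 0 <= nu * powR 2 (delta * k%:R) by rewrite (le_trans _ le_k) ?mulr_ge0 ?sqrtr_ge0.
have := lerXn2r 2 _ _ le_k; rewrite !nnegrE mulr_ge0 ?sqrtr_ge0 //= => /(_ isT rhs_ge0).
have -> : powR 2 (2 * delta * k%:R) = powR 2 (delta * k%:R) ^+ 2 :> R.
  by rewrite -powR_mulrn ?powR_ge0 // -powRrM; congr (powR 2 _); ring.
have -> : 16 = 4 ^+ 2 :> R by rewrite expr2 -natrM.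
by rewrite !exprMn sqr_sqrtr.
Qed.

Lemma detail_exponentE (R : realType) (a H delta : R) (K : nat) :
  (2 * a * powR 2 (- (H - delta) * K%:R)) ^+ 2 / (4 * powR ((2 ^+ K)^-1) (2 * H))
  = a ^+ 2 * powR 2 (2 * delta * K%:R).
Proof.
rewrite -powR_invn ?ler0n // -powRrM exprMn -[powR 2 _ ^+ 2]powR_mulrn ?powR_ge0 // -powRrM.
have -> : powR 2 (- (H - delta) * K%:R * 2%:R)
        = powR 2 (2 * delta * K%:R) * powR 2 (- K%:R * (2 * H)) :> R.
  by rewrite -powRD ?pnatr_eq0 ?implybT //; congr (powR 2 _); ring.
by field; rewrite gt_eqF ?powR_gt0.
Qed.

Lemma tail_union_le (R : realType) (m : nat) (nu nus z : R) :
  0 <= nu -> 0 <= nus -> 0 <= z -> m%:R <= nu ^+ 2 * z ->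
  (2 * expR (- ((nu + nus) ^+ 2 * z))) *+ 2 ^ m <= 2 * expR (- (nus ^+ 2 * (z / 4))).
Proof.
move=> nu_ge0 nus_ge0 z_ge0 m_le.
rewrite -mulr_natr natrX.
apply: (@le_trans _ _ (2 * expR (- ((nu + nus) ^+ 2 * z)) * expR (nu ^+ 2 * z))).
  apply: ler_wpM2l; first by rewrite mulr_ge0 ?expR_ge0.
  by rewrite (le_trans (pow2n_le_expR _ m)) // ler_expR.
rewrite -mulrA -expRD ler_pM2l // ler_expR.
have := mulr_ge0 (mulr_ge0 nu_ge0 nus_ge0) z_ge0.
have := mulr_ge0 (sqr_ge0 nus) z_ge0.
nra.
Qed.

Theorem theorem1 (R : realType) (d : measure_display) (T : measurableType d)
  (P : probability T R) (H : R) (B : R -> T -> R) (delta nu nustar : R) (k : nat) :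
  0 < H < 1 -> is_fBm P H B ->
  0 < delta < H -> 0 < nu -> 0 < nustar ->
  (* k > K(nu) := sup {n >= 1 : 4 sqrt n > nu 2^(delta n)} *)
  (1 <= k)%N ->
  (forall n : nat, (1 <= n)%N -> nu * powR 2 (delta * n%:R) < 4 * Num.sqrt (n%:R) -> (n < k)%N) ->
  let rho := 2 * (nu + nustar) in
  let ell := powR 2 (- (H - delta) * k%:R) in
  P [set w | rho * ell <= sup_norm01 (fun t => dyadic_interp B k w t - dyadic_interp B k.-1 w t)]
  = P [set w | rho * ell <= \big[Num.max/0]_(j < 2 ^ k.-1) `|coef_a B k j w - coef_b B k j w|]
  /\
  (P [set w | (rho * ell <= \big[Num.max/0]_(j < 2 ^ k.-1) `|coef_a B k j w - coef_b B k j w|)%R]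
   <= (2 * expR (- (nustar ^+ 2 * powR 2 (2 * k%:R * delta - 2))))%:E)%E.
Proof.
move=> /andP[H_gt0 H_lt1] fbm /andP[delta_gt0 _] nu_gt0 nus_gt0 k_ge1 below_k rho ell.
have := above_threshold_sq k_ge1 below_k.
case: k k_ge1 below_k @rho @ell => [//|k] _ _ rho ell /= k_le; split.
  by congr (P _); apply/seteqP; split => w /=; rewrite sup_norm01_interp_diff.
have x_gt0 : 0 < rho * ell by rewrite mulr_gt0 ?powR_gt0 // mulr_gt0 // addr_gt0.
have union := @measure_bigmax_ge_le _ _ _ P (2 ^ k)
  (fun j w => `|coef_a B k.+1 j w - coef_b B k.+1 j w|) _ x_gt0
  (fun j jN => measurable_fbm_detail_ge fbm _ jN).
apply: le_trans union _.
apply: le_trans (lee_sum _ (fun (j : 'I_(2 ^ k)) _ =>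
  fbm_detail_tail fbm H_gt0 H_lt1 (ltn_ord j) (ltW x_gt0))) _.
rewrite sumEFin sumr_const card_ord lee_fin detail_exponentE.
have -> : powR 2 (2 * k.+1%:R * delta - 2) = powR 2 (2 * delta * k.+1%:R) / 4 :> R.
  rewrite powRB ?pnatr_eq0 ?implybT // powR_mulrn ?ler0n // expr2 -natrM.
  by congr (powR 2 _ / _); ring.
apply: tail_union_le; rewrite ?powR_ge0 ?(ltW nu_gt0) ?(ltW nus_gt0) //.
by apply: le_trans _ k_le; rewrite -(@natr1 R k); have := ler0n R k; lra.
Qed.
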